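(* An R$^*$-algebra $A$ is purely atomic if and only if there is no strictly decreasing infinite sequence $p_1> p_2>\cdots$ of projections in $A$ (equivalently, no infinite strictly descending chain of principal right ideals of $A$).
   Context: An R$^*$-algebra is a (not necessarily closed, not necessarily unital) $^*$-subalgebra $A$ of $B(H)$, $H$ a complex Hilbert space, such that every self-adjoint element of $A$ has finite spectrum. Projections are $p=p^2=p^*$, ordered by $p\le q$ iff $pq=p$. An atom is a minimal nonzero projection in $A$; $A$ is purely atomic if every projection of $A$ is a sum of finitely many atoms. *)

From HB Require Import structures.
From mathcomp Require Import all_boot all_order all_algebra.
From mathcomp Require Import complex.
From mathcomp Require Import reals.
Set Implicit Arguments. Unset Strict Implicit. Unset Printing Implicit Defensive.
Import Order.TTheory GRing.Theory Num.Theory.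
Local Open Scope ring_scope.

Definition is_inner_product (R : realType) (V : lmodType R[i])
    (ip : V -> V -> R[i]) : Prop :=
  [/\ (forall (a : R[i]) (x y z : V), ip (a *: x + y) z = a * ip x z + ip y z),
      (forall x y : V, ip y x = (ip x y)^*),
      (forall x : V, 0 <= ip x x) &
      (forall x : V, ip x x = 0 -> x = 0)].

Definition normv (R : realType) (V : lmodType R[i]) (ip : V -> V -> R[i])
    (x : V) : R := Num.sqrt (complex.Re (ip x x)).

Definition is_complete (R : realType) (V : lmodType R[i])
    (ip : V -> V -> R[i]) : Prop :=
  forall u : nat -> V,
    (forall e : R, 0 < e -> exists N : nat, forall m n : nat,
        (N <= m)%N -> (N <= n)%N -> normv ip (u m - u n) < e) ->
    exists l : V, forall e : R, 0 < e -> exists N : nat, forall n : nat,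
        (N <= n)%N -> normv ip (u n - l) < e.

Definition is_hilbert (R : realType) (V : lmodType R[i])
    (ip : V -> V -> R[i]) : Prop :=
  is_inner_product ip /\ is_complete ip.

Definition is_linear_op (R : realType) (V : lmodType R[i]) (T : V -> V) : Prop :=
  forall (a : R[i]) (x y : V), T (a *: x + y) = a *: T x + T y.

Definition is_bounded_op (R : realType) (V : lmodType R[i])
    (ip : V -> V -> R[i]) (T : V -> V) : Prop :=
  is_linear_op T /\ exists M : R, forall x : V, normv ip (T x) <= M * normv ip x.

Definition is_adjoint (R : realType) (V : lmodType R[i])
    (ip : V -> V -> R[i]) (T S : V -> V) : Prop :=
  forall x y : V, ip (T x) y = ip x (S y).

Definition in_spectrum (R : realType) (V : lmodType R[i])
    (ip : V -> V -> R[i]) (T : V -> V) (lam : R[i]) : Prop :=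
  ~ exists S : V -> V, is_bounded_op ip S /\
      (forall x : V, S (T x - lam *: x) = x) /\
      (forall x : V, T (S x) - lam *: S x = x).

(* A : (V -> V) -> Prop is a (not necessarily closed, not necessarily unital)
   *-subalgebra of B(H) all of whose self-adjoint elements have finite
   spectrum. *)
Definition is_Rstar_algebra (R : realType) (V : lmodType R[i])
    (ip : V -> V -> R[i]) (A : (V -> V) -> Prop) : Prop :=
  (forall T, A T -> is_bounded_op ip T) /\
  A (fun _ => 0) /\
  (forall T S, A T -> A S -> A (fun x => T x + S x)) /\
  (forall (a : R[i]) T, A T -> A (fun x => a *: T x)) /\
  (forall T S, A T -> A S -> A (fun x => T (S x))) /\
  (forall T, A T -> exists S, A S /\ is_adjoint ip T S) /\
  (forall T, A T -> is_adjoint ip T T ->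
     exists s : seq R[i], forall lam, in_spectrum ip T lam -> lam \in s).

Definition is_proj (R : realType) (V : lmodType R[i])
    (ip : V -> V -> R[i]) (A : (V -> V) -> Prop) (p : V -> V) : Prop :=
  [/\ A p, (forall x, p (p x) = p x) & is_adjoint ip p p].

Definition proj_le (R : realType) (V : lmodType R[i]) (p q : V -> V) : Prop :=
  forall x, p (q x) = p x.

Definition proj_lt (R : realType) (V : lmodType R[i]) (p q : V -> V) : Prop :=
  proj_le p q /\ p <> q.

Definition is_atom (R : realType) (V : lmodType R[i])
    (ip : V -> V -> R[i]) (A : (V -> V) -> Prop) (p : V -> V) : Prop :=
  [/\ is_proj ip A p, p <> (fun _ => 0) &
      forall q, is_proj ip A q -> q <> (fun _ => 0) -> proj_le q p -> q = p].

Definition purely_atomic (R : realType) (V : lmodType R[i])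
    (ip : V -> V -> R[i]) (A : (V -> V) -> Prop) : Prop :=
  forall p, is_proj ip A p ->
    exists s : seq (V -> V),
      (forall i : nat, (i < size s)%N -> is_atom ip A (nth (fun _ => 0) s i)) /\
      p = (fun x => \sum_(q <- s) q x).

(* The principal right ideal of A generated by a in A (A need not be unital):
   aA + C a = { a x + lam a | x in A, lam in C }. *)
Definition principal_right_ideal (R : realType) (V : lmodType R[i])
    (A : (V -> V) -> Prop) (a : V -> V) : (V -> V) -> Prop :=
  fun T => exists (x : V -> V) (lam : R[i]),
      A x /\ T = (fun v => a (x v) + lam *: a v).

From HB Require Import structures.
From mathcomp Require Import all_boot all_order all_algebra.
From mathcomp Require Import complex.
From mathcomp Require Import reals.
From mathcomp Require Import boolp classical_sets.
From mathcomp Require Import ring lra.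
Import Order.TTheory GRing.Theory Num.Theory Num.Def.
Local Open Scope ring_scope.
Set Implicit Arguments. Unset Strict Implicit. Unset Printing Implicit Defensive.

(* Finite spectra enter through one fact: a self-adjoint T in A is annihilated
   by q = X * prod (X - Re lam), lam ranging over its spectrum. Otherwise
   q(T)^2 - |q(T)|^2 is not bounded below, hence neither is T - z for some
   root z of q^2 - |q(T)|^2; such a z is real and in the spectrum, so
   q(z) = 0, which is absurd.

   If p_0 = e_1 + ... + e_n with atoms e_j, then e_j Y e_j = t_j(Y) e_j for
   self-adjoint Y in A; t = t_1 + ... + t_n is additive and, since atoms e, f
   satisfy e f e = s e and f e f = s f with the same s, it equals 1 on every
   atom below p_0. So t counts the atoms in any decomposition of a projection
   below p_0 and would strictly decrease in N along a chain from p_0.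
   Conversely, without infinite chains every nonzero projection dominates an
   atom, and peeling atoms off a projection that is not a finite sum of atoms
   would produce a chain.

   Every principal right ideal aA + Ca equals pA + Cp for the projection
   p = h(aa^* ), h = 1 - r / r(0), where X^m r annihilates aa^* and r(0) <> 0;
   this matches chains of principal right ideals with chains of projections. *)

Section InnerProduct.
Variables (R : realType) (V : lmodType R[i]) (ip : V -> V -> R[i]).
Hypothesis Hip : is_inner_product ip.

Lemma ip_linear a x y z : ip (a *: x + y) z = a * ip x z + ip y z.
Proof. by case: Hip. Qed.

Lemma ip_conj x y : ip y x = (ip x y)^*.
Proof. by case: Hip. Qed.

Lemma ip0l z : ip 0 z = 0.
Proof.
have := ip_linear 1 0 0 z; rewrite scaler0 addr0 mul1r => h.
by apply: (@addrI _ (ip 0 z)); rewrite addr0 -h.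
Qed.

Lemma ipDl x y z : ip (x + y) z = ip x z + ip y z.
Proof. by have := ip_linear 1 x y z; rewrite scale1r mul1r. Qed.

Lemma ipZl a x z : ip (a *: x) z = a * ip x z.
Proof. by have := ip_linear a x 0 z; rewrite !addr0 ip0l addr0. Qed.

Lemma ipBl x y z : ip (x - y) z = ip x z - ip y z.
Proof. by rewrite -scaleN1r ipDl ipZl mulN1r. Qed.

Lemma ip0r z : ip z 0 = 0.
Proof. by rewrite ip_conj ip0l conjC0. Qed.

Lemma ipDr x y z : ip z (x + y) = ip z x + ip z y.
Proof. by rewrite ip_conj ipDl (ip_conj x z) (ip_conj y z) rmorphD. Qed.

Lemma ipZr a x z : ip z (a *: x) = a^* * ip z x.
Proof. by rewrite ip_conj ipZl (ip_conj x z) rmorphM. Qed.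

Lemma ipBr x y z : ip z (x - y) = ip z x - ip z y.
Proof. by rewrite -scaleN1r ipDr ipZr rmorphN1 mulN1r. Qed.

Lemma ip_suml (I : Type) (r : seq I) (P : pred I) (F : I -> V) z :
  ip (\sum_(i <- r | P i) F i) z = \sum_(i <- r | P i) ip (F i) z.
Proof. exact: (big_morph (ip^~ z) (fun x y => ipDl x y z) (ip0l z)). Qed.

Lemma ip_sumr (I : Type) (r : seq I) (P : pred I) (F : I -> V) z :
  ip z (\sum_(i <- r | P i) F i) = \sum_(i <- r | P i) ip z (F i).
Proof. exact: (big_morph (ip z) (fun x y => ipDr x y z) (ip0r z)). Qed.

Definition sqnorm x := complex.Re (ip x x).

Lemma ip_sqnorm x : ip x x = (sqnorm x)%:C%C.
Proof.
rewrite /sqnorm; have [_ _ /(_ x) + _] := Hip; case: (ip x x) => a b.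
by rewrite lecE /= => /andP[/eqP-> _].
Qed.

Lemma sqnorm_ge0 x : 0 <= sqnorm x.
Proof. by have [_ _ /(_ x) + _] := Hip; rewrite ip_sqnorm ler0c. Qed.

Lemma sqnorm_eq0 x : sqnorm x = 0 -> x = 0.
Proof. by have [_ _ _ h0] := Hip => hx; apply: h0; rewrite ip_sqnorm hx. Qed.

Lemma sqnorm0 : sqnorm 0 = 0.
Proof. by rewrite /sqnorm ip0l. Qed.

Lemma ip_injl a b : (forall w, ip a w = ip b w) -> a = b.
Proof.
move=> h; apply/eqP; rewrite -subr_eq0; apply/eqP/sqnorm_eq0.
by rewrite /sqnorm ipBl h subrr.
Qed.

Local Notation selfadjoint T := (is_adjoint ip T T).

Lemma proj_le_fix (p q : V -> V) : selfadjoint p -> selfadjoint q ->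
  proj_le q p <-> forall v, p (q v) = q v.
Proof.
move=> hp hq; split=> h v; apply: ip_injl => w; first by rewrite hp hq h -hq.
by rewrite hq hp h -hq.
Qed.

Lemma selfadjoint_ip_real (T : V -> V) x : selfadjoint T ->
  ip (T x) x = (complex.Re (ip (T x) x))%:C%C.
Proof.
move=> h; have : (ip (T x) x)^* = ip (T x) x by rewrite -ip_conj h.
by case: (ip (T x) x) => a b /= [] hb; congr (Complex _ _); lra.
Qed.

Lemma selfadjoint_sqr_eq0 (T : V -> V) v : selfadjoint T -> T (T v) = 0 -> T v = 0.
Proof. by move=> hT h; apply: sqnorm_eq0; rewrite /sqnorm hT h ip0r. Qed.

Lemma selfadjoint_iter_eq0 (T : V -> V) k v : selfadjoint T ->
  iter k.+1 T v = 0 -> T v = 0.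
Proof.
move=> hT; elim: k v => [|k IH] v //; rewrite iterSr => /IH.
exact: selfadjoint_sqr_eq0.
Qed.

End InnerProduct.

Section LinearOperator.
Variables (R : realType) (V : lmodType R[i]) (T : V -> V).
Hypothesis HT : is_linear_op T.

Lemma linop0 : T 0 = 0.
Proof.
have := HT 1 0 0; rewrite scaler0 addr0 scale1r => h.
by apply: (@addrI _ (T 0)); rewrite addr0 -h.
Qed.

Lemma linopD x y : T (x + y) = T x + T y.
Proof. by have := HT 1 x y; rewrite !scale1r. Qed.

Lemma linopZ a x : T (a *: x) = a *: T x.
Proof. by have := HT a x 0; rewrite !addr0 linop0 addr0. Qed.

Lemma linopB x y : T (x - y) = T x - T y.
Proof. by rewrite -scaleN1r linopD linopZ scaleN1r. Qed.

Lemma linop_sum (I : Type) (r : seq I) (P : pred I) (F : I -> V) :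
  T (\sum_(i <- r | P i) F i) = \sum_(i <- r | P i) T (F i).
Proof. exact: (big_morph T linopD linop0). Qed.

Lemma iter_linop n : is_linear_op (iter n T).
Proof. by elim: n => [|n IH] a x y //=; rewrite IH linopD linopZ. Qed.

End LinearOperator.

Section HornerOp.
Variables (R : realType) (V : lmodType R[i]) (T : V -> V).
Hypothesis HT : is_linear_op T.

Definition horner_op (p : {poly R[i]}) (v : V) : V :=
  \sum_(i < size p) p`_i *: iter i T v.

Lemma horner_op_widen n (p : {poly R[i]}) v : (size p <= n)%N ->
  horner_op p v = \sum_(i < n) p`_i *: iter i T v.
Proof.
move=> h; rewrite /horner_op (big_ord_widen n (fun i => p`_i *: iter i T v) h).
rewrite big_mkcond; apply: eq_bigr => i _; case: ifP => // /negbT.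
by rewrite -leqNgt => hi; rewrite nth_default // scale0r.
Qed.

Lemma horner_opD p q v : horner_op (p + q) v = horner_op p v + horner_op q v.
Proof.
set n := maxn (size p) (size q).
rewrite !(@horner_op_widen n) ?leq_maxl ?leq_maxr ?size_polyD // -big_split /=.
by apply: eq_bigr => i _; rewrite coefD scalerDl.
Qed.

Lemma horner_opZ c p v : horner_op (c *: p) v = c *: horner_op p v.
Proof.
rewrite !(@horner_op_widen (size p)) ?size_scale_leq // scaler_sumr.
by apply: eq_bigr => i _; rewrite coefZ scalerA.
Qed.

Lemma horner_opB p q v : horner_op (p - q) v = horner_op p v - horner_op q v.
Proof. by rewrite -[- q]scaleN1r horner_opD horner_opZ scaleN1r. Qed.

Lemma horner_opC c v : horner_op c%:P v = c *: v.
Proof. by rewrite (@horner_op_widen 1) ?size_polyC_leq1 // big_ord1 coefC. Qed.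

Lemma horner_op1 v : horner_op 1 v = v.
Proof. by rewrite -polyC1 horner_opC scale1r. Qed.

Lemma horner_opXM p v : horner_op ('X * p) v = T (horner_op p v).
Proof.
have hs : (size ('X * p)%R <= (size p).+1)%N.
  by apply: leq_trans (size_polyMleq 'X p) _; rewrite size_polyX.
rewrite (horner_op_widen _ hs) big_ord_recl coefXM /= scale0r add0r.
rewrite /horner_op (linop_sum HT); apply: eq_bigr => i _.
by rewrite coefXM /= (linopZ HT).
Qed.

Lemma horner_opXnM n p v : horner_op ('X ^+ n * p) v = iter n T (horner_op p v).
Proof. by elim: n => [|n IH]; rewrite ?expr0 ?mul1r // exprS -mulrA horner_opXM IH. Qed.

Lemma horner_opX v : horner_op 'X v = T v.
Proof. by rewrite -[X in horner_op X]mulr1 horner_opXM horner_op1. Qed.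

Lemma horner_op_linear p : is_linear_op (horner_op p).
Proof.
move=> a x y; rewrite /horner_op scaler_sumr -big_split /=; apply: eq_bigr => i _.
by rewrite (iter_linop HT) scalerDr !scalerA mulrC.
Qed.

Lemma horner_opM p q v : horner_op (p * q) v = horner_op p (horner_op q v).
Proof.
elim/poly_ind: p v => [|p c IH] v.
  by rewrite mul0r /horner_op size_poly0 !big_ord0.
have -> : (p * 'X + c%:P) * q = 'X * (p * q) + c *: q by rewrite -mul_polyC; ring.
by rewrite horner_opD horner_opXM horner_opZ IH horner_opD mulrC horner_opXM horner_opC.
Qed.

Lemma horner_op_eigen a w p : T w = a *: w -> horner_op p w = p.[a] *: w.
Proof.
move=> h; have iterE n : iter n T w = a ^+ n *: w.
  elim: n => [|n IH] /=; first by rewrite expr0 scale1r.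
  by rewrite IH (linopZ HT) h scalerA exprS mulrC.
rewrite /horner_op horner_coef scaler_suml; apply: eq_bigr => i _.
by rewrite iterE scalerA.
Qed.

Lemma horner_op_comm (S : V -> V) p : is_linear_op S ->
  (forall v, S (T v) = T (S v)) -> forall v, S (horner_op p v) = horner_op p (S v).
Proof.
move=> HS hST v; have iterC n w : S (iter n T w) = iter n T (S w).
  by elim: n w => [|n IH] w //=; rewrite hST IH.
rewrite /horner_op (linop_sum HS); apply: eq_bigr => i _.
by rewrite (linopZ HS) iterC.
Qed.

Lemma horner_op_selfadjoint ip p : is_inner_product ip -> is_adjoint ip T T ->
  p \is a polyOver real_num_pred -> is_adjoint ip (horner_op p) (horner_op p).
Proof.
move=> Hip hT /polyOverP hp x y.
have iterA n : is_adjoint ip (iter n T) (iter n T).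
  by elim: n => [|n IH] u w //=; rewrite hT IH -iterSr.
rewrite /horner_op (ip_suml Hip) (ip_sumr Hip); apply: eq_bigr => i _.
by rewrite (ipZl Hip) (ipZr Hip) iterA; have /CrealP -> := hp i.
Qed.

End HornerOp.

Section BoundedBelow.
Variables (R : realType) (V : lmodType R[i]) (ip : V -> V -> R[i]).
Hypothesis Hip : is_inner_product ip.
Local Notation sqnorm := (sqnorm ip).
Local Notation selfadjoint T := (is_adjoint ip T T).

Definition bounded_below (S : V -> V) :=
  exists2 c : R, 0 < c & forall x, c * sqnorm x <= sqnorm (S x).

Lemma bounded_below_ext S S' : S =1 S' -> bounded_below S -> bounded_below S'.
Proof. by move=> h [c c0 hc]; exists c => // x; rewrite -h. Qed.

Lemma bounded_below_comp S1 S2 :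
  bounded_below S1 -> bounded_below S2 -> bounded_below (fun v => S1 (S2 v)).
Proof.
move=> [c1 c10 h1] [c2 c20 h2]; exists (c1 * c2) => [|x]; first exact: mulr_gt0.
by apply: le_trans (h1 _); rewrite -mulrA ler_pM2l.
Qed.

Lemma sqnorm_shift T x z : selfadjoint T ->
  sqnorm (T x - z *: x) = sqnorm (T x) - 2 * complex.Re z * complex.Re (ip (T x) x)
     + (complex.Re z ^+ 2 + complex.Im z ^+ 2) * sqnorm x.
Proof.
move=> hT; rewrite /sqnorm (ipBl Hip) !(ipBr Hip) !(ipZl Hip) !(ipZr Hip).
rewrite -[ip x (T x)]hT (selfadjoint_ip_real Hip x hT) !(ip_sqnorm Hip).
by case: z => a b /=; ring.
Qed.

Lemma not_bounded_below_real T z : selfadjoint T ->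
  ~ bounded_below (fun v => T v - z *: v) -> complex.Im z = 0.
Proof.
move=> hT nb; apply: contrapT => hz; apply: nb.
exists (complex.Im z ^+ 2) => [|x]; first by rewrite exprn_even_gt0 //; apply/eqP.
have := sqnorm_ge0 Hip (T x - (complex.Re z)%:C%C *: x).
by rewrite !(sqnorm_shift x _ hT) /= expr0n /= addr0 => h; lra.
Qed.

Lemma sqnorm_scale (t : R) w : sqnorm ((t%:C)%C *: w) = t ^+ 2 * sqnorm w.
Proof.
rewrite /sqnorm (ipZl Hip) (ipZr Hip) (ip_sqnorm Hip) conj_Creal /=; first ring.
by apply/complex_realP; exists t.
Qed.

Lemma sqnorm_bounded S K : (forall x, normv ip (S x) <= K * normv ip x) ->
  forall x, sqnorm (S x) <= K ^+ 2 * sqnorm x.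
Proof.
move=> h x; have := h x; rewrite /normv -/(sqnorm _) -/(sqnorm x) => hx.
have s1 := sqrtr_ge0 (sqnorm (S x)); have s2 := sqrtr_ge0 (sqnorm x).
rewrite -(sqr_sqrtr (sqnorm_ge0 Hip (S x))) -(sqr_sqrtr (sqnorm_ge0 Hip x)); nra.
Qed.

Lemma spectrum_of_not_bounded_below T z :
  ~ bounded_below (fun v => T v - z *: v) -> in_spectrum ip T z.
Proof.
move=> nb [S [[_ [K hK]] [hST _]]]; apply: nb.
have hp : 0 < K ^+ 2 + 1 by rewrite ltr_pwDr ?sqr_ge0.
exists (K ^+ 2 + 1)^-1 => [|x]; first by rewrite invr_gt0.
have := sqnorm_bounded hK (T x - z *: x); rewrite hST.
have := sqnorm_ge0 Hip (T x - z *: x); rewrite ler_pdivrMl //; nra.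
Qed.

(* M is the squared operator norm of B; an almost norming vector x for B is
   an approximate eigenvector of B^2 for the eigenvalue M. *)
Lemma selfadjoint_shift_not_bounded_below B K : is_linear_op B -> selfadjoint B ->
  (forall x, normv ip (B x) <= K * normv ip x) -> (exists v, B v <> 0) ->
  exists2 M : R, 0 < M & ~ bounded_below (fun x => B (B x) - (M%:C)%C *: x).
Proof.
move=> Bl Ba hK [v hv].
pose S : set R := fun r => exists2 x, sqnorm x <= 1 & r = sqnorm (B x).
have hS : has_sup S.
  split; first by exists 0, 0; rewrite ?(sqnorm0 Hip) ?(linop0 Bl) ?(sqnorm0 Hip).
  exists (K ^+ 2) => _ [x hx ->]; apply: le_trans (sqnorm_bounded hK x) _.
  by rewrite ler_piMr ?sqr_ge0.
pose M := sup S.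
have hM x : sqnorm (B x) <= M * sqnorm x.
  have [/(sqnorm_eq0 Hip) -> | nx] := eqVneq (sqnorm x) 0.
    by rewrite (linop0 Bl) (sqnorm0 Hip) mulr0.
  have nx0 : 0 < sqnorm x by rewrite lt_def nx (sqnorm_ge0 Hip).
  pose t := (Num.sqrt (sqnorm x))^-1.
  have ht : t ^+ 2 * sqnorm x = 1 by rewrite exprVn sqr_sqrtr ?mulVf // ltW.
  have /(sup_upper_bound hS) : S (sqnorm (B ((t%:C)%C *: x))).
    by exists ((t%:C)%C *: x); rewrite ?sqnorm_scale ?ht.
  rewrite /= (linopZ Bl) sqnorm_scale -(ler_pM2l nx0) mulrA [_ * t ^+ 2]mulrC ht.
  by rewrite mul1r mulrC.
have M0 : 0 < M.
  have : 0 < sqnorm (B v).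
    by rewrite lt_def (sqnorm_ge0 Hip) andbT; apply/eqP => /(sqnorm_eq0 Hip).
  by have := hM v; have := sqnorm_ge0 Hip v; nra.
exists M => // -[c c0 hc].
pose e := Num.min (M / 2) (c / (2 * M)).
have e0 : 0 < e by rewrite lt_min !divr_gt0 ?mulr_gt0.
have [_ [x hx ->] hr] := sup_adherent e0 hS.
have BBa : selfadjoint (fun v => B (B v)) by move=> y z; rewrite !Ba.
have := hc x; rewrite (sqnorm_shift x _ BBa) /= Ba -/(sqnorm (B x)) expr0n /= addr0.
have := hM (B x); have := hM x; have := sqnorm_ge0 Hip x.
have hem : e * 2 <= M by rewrite -ler_pdivlMr // ge_min lexx.
have hec : e * (2 * M) <= c by rewrite -ler_pdivlMr ?mulr_gt0 // ge_min lexx orbT.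
rewrite -/M in hr; nra.
Qed.

Lemma bounded_below_prod_XsubC T (rs : seq R[i]) : is_linear_op T ->
  (forall z, z \in rs -> bounded_below (fun v => T v - z *: v)) ->
  bounded_below (horner_op T (\prod_(z <- rs) ('X - z%:P))).
Proof.
move=> Tl; elim: rs => [|z rs IH] h.
  by rewrite big_nil; exists 1 => // x; rewrite horner_op1 mul1r.
rewrite big_cons; apply: (bounded_below_ext (S := fun v => (fun w => T w - z *: w)
   (horner_op T (\prod_(z <- rs) ('X - z%:P)) v))).
  by move=> x; rewrite horner_opM // horner_opB // horner_opX // horner_opC.
apply: (bounded_below_comp (S1 := fun w => T w - z *: w)).
  by apply: h; rewrite mem_head.
by apply: IH => z' hz'; apply: h; rewrite in_cons hz' orbT.
Qed.

Lemma monic_not_bounded_below_root T P : is_linear_op T -> P \is monic ->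
  ~ bounded_below (horner_op T P) ->
  exists2 z, root P z & ~ bounded_below (fun v => T v - z *: v).
Proof.
move=> Tl /monicP lP nb; have [rs hrs] := closed_field_poly_normal P.
rewrite lP scale1r in hrs; apply: contrapT => h; apply: nb; rewrite hrs.
apply: bounded_below_prod_XsubC => // z hz; apply: contrapT => nbz; apply: h.
by exists z; rewrite // hrs root_prod_XsubC.
Qed.

Lemma split_poly_annihilates T (L : seq R[i]) : is_linear_op T -> selfadjoint T ->
  L != [::] -> {subset L <= Num.real} ->
  (forall z, ~ bounded_below (fun v => T v - z *: v) -> z \in L) ->
  (exists K, forall x,
     normv ip (horner_op T (\prod_(a <- L) ('X - a%:P)) x) <= K * normv ip x) ->
  forall v, horner_op T (\prod_(a <- L) ('X - a%:P)) v = 0.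
Proof.
move=> Tl Ta L0 Lr hL [K hK] v; apply: contrapT => hv.
set q := \prod_(a <- L) ('X - a%:P) in hK hv.
have qr : q \is a polyOver real_num_pred.
  by rewrite /q big_seq; apply: rpred_prod => a /Lr; rewrite polyOverXsubC.
have [M M0 nb] := selfadjoint_shift_not_bounded_below (horner_op_linear Tl q)
  (horner_op_selfadjoint Hip Ta qr) hK (ex_intro _ v hv).
pose P := q * q - ((M%:C)%C)%:P.
have qm : q \is monic by apply: monic_prod_XsubC.
have Pm : P \is monic.
  rewrite monicE lead_coefDl ?lead_coef_Mmonic //.
  rewrite size_polyN size_Mmonic ?monic_neq0 // size_prod_XsubC.
  apply: leq_ltn_trans (size_polyC_leq1 _) _.
  by move: L0; rewrite -size_eq0; case: (size L) => [|n] //= _; rewrite addnS.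
have [z Pz nbz] : exists2 z, root P z & ~ bounded_below (fun v => T v - z *: v).
  apply: monic_not_bounded_below_root => // nbP; apply: nb.
  by apply: bounded_below_ext nbP => x; rewrite horner_opB // horner_opM // horner_opC.
have qz : root q z by rewrite root_prod_XsubC hL.
move: Pz; rewrite /root hornerD hornerN hornerM hornerC (eqP qz) mul0r sub0r oppr_eq0.
by move/eqP => [] /eqP; rewrite gt_eqF.
Qed.
End BoundedBelow.

Lemma ex_step_true_false (P : nat -> Prop) n : P 0%N -> ~ P n ->
  exists k, P k /\ ~ P k.+1.
Proof.
move=> P0 Pn; apply: contrapT => h; apply: Pn; elim: n => // n IH.
by apply: contrapT => nP; apply: h; exists n.
Qed.

Lemma scale_fun_inj (R : realType) (V : lmodType R[i]) (e : V -> V) (t1 t2 : R[i]) :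
  e <> (fun _ => 0) -> (forall v, t1 *: e v = t2 *: e v) -> t1 = t2.
Proof.
move=> enz h; apply: contrapT => /eqP t12; apply: enz; apply: funext => v.
have /eqP := h v; rewrite -subr_eq0 -scalerBl scaler_eq0 subr_eq0.
by rewrite (negbTE t12) => /eqP.
Qed.

Section Projections.
Variables (R : realType) (V : lmodType R[i]) (ip : V -> V -> R[i]).
Hypothesis Hip : is_inner_product ip.
Local Notation d := (fun _ : V => 0 : V).
Local Notation selfadjoint T := (is_adjoint ip T T).

Lemma proj_le_trans (p q r : V -> V) : proj_le p q -> proj_le q r -> proj_le p r.
Proof. by move=> h1 h2 v; rewrite -h1 h2 h1. Qed.

(* For x = l_i x one has <r x, x> = \sum_j |l_j x|^2 >= |x|^2, hence
   |x - r x|^2 = |x|^2 - <r x, x> <= 0. *)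
Lemma proj_sum_summand_le r (l : seq (V -> V)) i :
  selfadjoint r -> (forall v, r (r v) = r v) ->
  (forall j, (j < size l)%N -> (forall v, nth d l j (nth d l j v) = nth d l j v)
     /\ selfadjoint (nth d l j)) ->
  (forall v, r v = \sum_(j < size l) nth d l j v) -> (i < size l)%N ->
  proj_le (nth d l i) r.
Proof.
move=> radj rid hl hr hi; have [eid eadj] := hl i hi.
apply/(proj_le_fix Hip radj eadj) => v; set x := nth d l i v.
have hx : nth d l i x = x by rewrite /x eid.
apply/eqP; rewrite eq_sym -subr_eq0; apply/eqP/(sqnorm_eq0 Hip).
apply/eqP; rewrite eq_le (sqnorm_ge0 Hip) andbT.
have rxx : ip x (r x) = ip (r x) x by rewrite radj.
have e1 : ip (x - r x) (x - r x) = ip x x - ip (r x) x.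
  rewrite (ipBl Hip) !(ipBr Hip) [ip (r x) (r x)]radj rid rxx; ring.
have e2 : ip (r x) x = (\sum_(j < size l) sqnorm ip (nth d l j x))%:C%C.
  rewrite hr (ip_suml Hip) rmorph_sum; apply: eq_bigr => j _.
  have [gid gadj] := hl j (ltn_ord j).
  by rewrite -{1}gid gadj (ip_sqnorm Hip).
rewrite /sqnorm e1 e2 (ip_sqnorm Hip x) /= subr_le0 (bigD1 (Ordinal hi)) //= hx.
by rewrite lerDl sumr_ge0 // => j _; apply: sqnorm_ge0.
Qed.

End Projections.

Section RstarAlgebra.
Variables (R : realType) (V : lmodType R[i]) (ip : V -> V -> R[i]).
Hypothesis Hip : is_inner_product ip.
Variable A : (V -> V) -> Prop.
Hypothesis HA : is_Rstar_algebra ip A.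
Local Notation selfadjoint T := (is_adjoint ip T T).

Lemma alg_bounded T : A T -> is_bounded_op ip T.
Proof. by case: HA => h _; apply: h. Qed.

Lemma alg_linear T : A T -> is_linear_op T.
Proof. by move/alg_bounded => []. Qed.

Lemma alg0 : A (fun _ => 0).
Proof. by case: HA => _ []. Qed.

Lemma algD T S : A T -> A S -> A (fun x => T x + S x).
Proof. by case: HA => _ [_ [h _]]; apply: h. Qed.

Lemma algZ a T : A T -> A (fun x => a *: T x).
Proof. by case: HA => _ [_ [_ [h _]]]; apply: h. Qed.

Lemma algM T S : A T -> A S -> A (fun x => T (S x)).
Proof. by case: HA => _ [_ [_ [_ [h _]]]]; apply: h. Qed.

Lemma alg_adjoint T : A T -> exists2 S, A S & is_adjoint ip T S.
Proof. by case: HA => _ [_ [_ [_ [_ [h _]]]]] /h [S []]; exists S. Qed.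

Lemma alg_finite_spectrum T : A T -> selfadjoint T ->
  exists s : seq R[i], forall lam, in_spectrum ip T lam -> lam \in s.
Proof. by case: HA => _ [_ [_ [_ [_ [_ h]]]]]; apply: h. Qed.

Lemma alg_ext T S : T =1 S -> A T -> A S.
Proof. by move/funext ->. Qed.

Lemma algB T S : A T -> A S -> A (fun x => T x - S x).
Proof.
move=> hT hS; apply: alg_ext (algD hT (algZ (-1) hS)) => x.
by rewrite scaleN1r.
Qed.

Lemma alg_sum n (F : nat -> V -> V) : (forall i, (i < n)%N -> A (F i)) ->
  A (fun v => \sum_(i < n) F i v).
Proof.
elim: n => [|n IH] h; first by apply: alg_ext alg0 => x; rewrite big_ord0.
apply: (alg_ext (T := fun v => \sum_(i < n) F i v + F n v)) => [x|].
  by rewrite big_ord_recr.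
apply: algD; last exact: h.
by apply: IH => i hi; apply: h; rewrite ltnS ltnW.
Qed.

Lemma alg_iter T k : A T -> A (iter k.+1 T).
Proof. by move=> hT; elim: k => [|k IH] //; apply: alg_ext (algM hT IH). Qed.

Lemma alg_horner_op T (p : {poly R[i]}) : A T -> p`_0 = 0 -> A (horner_op T p).
Proof.
move=> hT h0; apply: (alg_sum (F := fun i v => p`_i *: iter i T v)) => -[|i] _.
  by apply: alg_ext alg0 => x; rewrite h0 scale0r.
exact/algZ/alg_iter.
Qed.

Lemma alg_horner_op_comp T e (p : {poly R[i]}) :
  A T -> A e -> A (fun v => horner_op T p (e v)).
Proof.
move=> hT he; apply: (alg_sum (F := fun i v => p`_i *: iter i T (e v))).
by move=> [|i] _; [exact: algZ | exact/algZ/algM/he/alg_iter].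
Qed.

Lemma alg_comp_horner_op T e (p : {poly R[i]}) :
  A T -> A e -> A (fun v => e (horner_op T p v)).
Proof.
move=> hT he; have el := alg_linear he.
apply: alg_ext (alg_sum (F := fun i v => p`_i *: e (iter i T v)) _) => [x|].
  by rewrite /horner_op (linop_sum el); apply: eq_bigr => i _; rewrite (linopZ el).
by move=> [|i] _; [exact: algZ | exact/algZ/algM/alg_iter].
Qed.

(* 0 is added to the roots so that q(T) has no constant term and lies in the
   non-unital A; the real parts are taken so that q(T) is self-adjoint. *)
Lemma alg_selfadjoint_annihilator T : A T -> selfadjoint T ->
  exists2 L : seq R[i], {subset L <= Num.real} &
    forall v, horner_op T (\prod_(a <- L) ('X - a%:P)) v = 0.
Proof.
move=> hT hTa; have [s hs] := alg_finite_spectrum hT hTa.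
pose L := 0 :: [seq (complex.Re a)%:C%C | a <- s].
have Lr : {subset L <= Num.real}.
  move=> a; rewrite in_cons => /orP [/eqP -> | /mapP [b _ ->]]; first exact: rpred0.
  by apply/complex_realP; exists (complex.Re b).
exists L => //; apply: (split_poly_annihilates Hip (alg_linear hT)) => // [z nbz|].
  have zs := hs z (spectrum_of_not_bounded_below Hip nbz).
  rewrite in_cons; apply/orP; right; apply/mapP; exists z => //.
  by move: (not_bounded_below_real Hip hTa nbz); case: (z) => a b /= ->.
have q0 : (\prod_(a <- L) ('X - a%:P))`_0 = 0 by rewrite big_cons subr0 coefXM.
by have [_ [K hK]] := alg_bounded (alg_horner_op hT q0); exists K.
Qed.

End RstarAlgebra.

Section Atoms.
Variables (R : realType) (V : lmodType R[i]) (ip : V -> V -> R[i]).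
Hypothesis Hip : is_inner_product ip.
Variable A : (V -> V) -> Prop.
Hypothesis HA : is_Rstar_algebra ip A.
Local Notation selfadjoint T := (is_adjoint ip T T).

Lemma atom_eq_scaled_proj e w c : is_atom ip A e -> A w -> selfadjoint w ->
  w <> (fun _ => 0) -> c \is Num.real -> (forall v, w (w v) = c *: w v) ->
  proj_le w e -> forall v, e v = c^-1 *: w v.
Proof.
move=> [_ _ emin] wA wadj wnz cr wwc wle.
have wl := alg_linear HA wA.
have c0 : c != 0.
  apply/eqP => c0; apply: wnz; apply: funext => v.
  by apply: (selfadjoint_sqr_eq0 Hip wadj); rewrite wwc c0 scale0r.
suff <- : (fun v => c^-1 *: w v) = e by [].
apply: emin => [|f0|v]; last by rewrite wle.
- split=> [|v|u v]; first exact: (algZ HA).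
    by rewrite (linopZ wl) wwc !scalerA -mulrA mulVf // mulr1.
  by rewrite (ipZl Hip) (ipZr Hip) wadj conj_Creal // rpredV.
- apply: wnz; apply: funext => v; have /eqP := congr1 (fun g => g v) f0.
  by rewrite scaler_eq0 invr_eq0 (negbTE c0) => /eqP.
Qed.

(* Multiplying e by successive linear factors of the annihilator of y, the
   last nonzero product w satisfies (y - a) w = 0, and w is a real multiple
   of a projection below e. *)
Lemma atom_selfadjoint_scalar e y : is_atom ip A e -> A y -> selfadjoint y ->
  (forall v, y (e v) = y v) -> (forall v, e (y v) = y v) ->
  exists a : R[i], forall v, y v = a *: e v.
Proof.
move=> he yA yadj ye ey; have [[eA eid eadj] enz _] := he.
have yl := alg_linear HA yA; have el := alg_linear HA eA.
have [L Lr hL] := alg_selfadjoint_annihilator Hip HA yA yadj.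
pose Q k := \prod_(a <- take k L) ('X - a%:P).
pose z k v := horner_op y (Q k) (e v).
have eQ k v : e (horner_op y (Q k) v) = horner_op y (Q k) (e v).
  by apply: horner_op_comm => // w; rewrite ey ye.
have [k [zk zk1]] : exists k, z k <> (fun _ => 0) /\ ~ z k.+1 <> (fun _ => 0).
  apply: (@ex_step_true_false _ (size L)).
    by rewrite /z /Q take0 big_nil; under eq_fun do rewrite horner_op1.
  by rewrite /z /Q take_size; under eq_fun do rewrite hL.
have {}zk1 : z k.+1 = (fun _ => 0) by apply: contrapT.
have kL : (k < size L)%N.
  rewrite ltnNge; apply/negP => hk; apply: zk; rewrite -zk1 /z /Q.
  by rewrite !take_oversize ?(leq_trans hk).
pose a := nth 0 L k.
have eig v : y (z k v) = a *: z k v.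
  apply/eqP; rewrite -subr_eq0; apply/eqP.
  have -> : 0 = z k.+1 v by rewrite zk1.
  rewrite /z /Q (take_nth 0 kL) -cats1 big_cat big_seq1 /= mulrC.
  by rewrite horner_opM // horner_opB // horner_opX // horner_opC.
have Qr : Q k \is a polyOver real_num_pred.
  by rewrite /Q big_seq; apply: rpred_prod => b /mem_take /Lr; rewrite polyOverXsubC.
have ar : a \is Num.real by apply/Lr/mem_nth.
have ez v : e (z k v) = z k v by rewrite /z eQ eid.
have zadj : selfadjoint (z k).
  by move=> u w; rewrite /z (horner_op_selfadjoint Hip yadj Qr) eadj eQ.
have zz v : z k (z k v) = (Q k).[a] *: z k v.
  by rewrite {1}/z ez (horner_op_eigen yl _ (eig v)).
have hz := atom_eq_scaled_proj he (alg_horner_op_comp HA _ yA eA) zadj zk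
  (rpred_horner Qr ar) zz (fun v => congr1 (horner_op y (Q k)) (eid v)).
by exists a => v; rewrite -ye hz (linopZ yl) eig scalerA mulrC -scalerA -hz.
Qed.

End Atoms.

(* Junk value 0 when e Y e is not a multiple of e. *)
Definition corner (R : realType) (V : lmodType R[i]) (e Y : V -> V) : R[i] :=
  xget 0 (fun t => forall v, e (Y (e v)) = t *: e v).

Section Corner.
Variables (R : realType) (V : lmodType R[i]) (ip : V -> V -> R[i]).
Hypothesis Hip : is_inner_product ip.
Variable A : (V -> V) -> Prop.
Hypothesis HA : is_Rstar_algebra ip A.
Local Notation selfadjoint T := (is_adjoint ip T T).

Lemma cornerP e Y : is_atom ip A e -> A Y -> selfadjoint Y ->
  forall v, e (Y (e v)) = corner e Y *: e v.
Proof.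
move=> he YA Yadj; have [[eA eid eadj] _ _] := he.
apply: (xgetPex 0 (P := fun t => forall v, e (Y (e v)) = t *: e v)).
apply: (atom_selfadjoint_scalar Hip HA he (algM HA eA (algM HA YA eA))).
- by move=> u w; rewrite eadj Yadj eadj.
- by move=> v; rewrite eid.
- by move=> v; rewrite eid.
Qed.

Lemma cornerD e Y1 Y2 : is_atom ip A e -> A Y1 -> A Y2 ->
  selfadjoint Y1 -> selfadjoint Y2 ->
  corner e (fun v => Y1 v + Y2 v) = corner e Y1 + corner e Y2.
Proof.
move=> he h1 h2 a1 a2; have [[eA _ _] enz _] := he; have el := alg_linear HA eA.
have a12 : selfadjoint (fun v => Y1 v + Y2 v).
  by move=> u w; rewrite (ipDl Hip) (ipDr Hip) a1 a2.
apply: (scale_fun_inj enz) => v.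
rewrite -(cornerP he (algD HA h1 h2) a12) /= (linopD el).
by rewrite (cornerP he h1 a1) (cornerP he h2 a2) scalerDl.
Qed.

Lemma corner0 e : is_atom ip A e -> corner e (fun _ => 0) = 0.
Proof.
move=> he; have [[eA _ _] enz _] := he; have el := alg_linear HA eA.
apply: (scale_fun_inj enz) => v.
by rewrite -(cornerP he (alg0 HA)) ?(linop0 el) ?scale0r // => u w; rewrite ip0l ?ip0r.
Qed.

(* Computing efefe and fefef in two ways gives t^2 = t't and t'^2 = tt'. *)
Lemma corner_sym e f : is_atom ip A e -> is_atom ip A f -> corner e f = corner f e.
Proof.
move=> he hf; have [[eA _ eadj] enz _] := he; have [[fA _ fadj] fnz _] := hf.
have el := alg_linear HA eA; have fl := alg_linear HA fA.
have ht := cornerP he fA fadj; have ht' := cornerP hf eA eadj.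
set t := corner e f in ht *; set t' := corner f e in ht' *.
have h1 : t * t = t' * t.
  apply: (scale_fun_inj enz) => v; rewrite -!scalerA -!ht.
  by rewrite -[in RHS](linopZ el) -ht'.
have h2 : t' * t' = t * t'.
  apply: (scale_fun_inj fnz) => v; rewrite -!scalerA -!ht'.
  by rewrite -[in RHS](linopZ fl) -ht.
have : (t - t') * (t - t') = 0 by rewrite mulrBl !mulrBr h1 h2; ring.
by move/eqP; rewrite mulf_eq0 orbb subr_eq0 => /eqP.
Qed.

End Corner.

Section AtomTrace.
Variables (R : realType) (V : lmodType R[i]) (ip : V -> V -> R[i]).
Hypothesis Hip : is_inner_product ip.
Variable A : (V -> V) -> Prop.
Hypothesis HA : is_Rstar_algebra ip A.
Local Notation d := (fun _ : V => 0 : V).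
Local Notation selfadjoint T := (is_adjoint ip T T).

Lemma alg_selfadjoint_sum (l : seq (V -> V)) :
  (forall j, (j < size l)%N -> A (nth d l j) /\ selfadjoint (nth d l j)) ->
  A (fun v => \sum_(g <- l) g v) /\ selfadjoint (fun v => \sum_(g <- l) g v).
Proof.
elim: l => [|g l IH] h.
  split=> [|u w]; first by apply: alg_ext (alg0 HA) => x; rewrite big_nil.
  by rewrite !big_nil (ip0l Hip) (ip0r Hip).
have [gA gadj] := h 0%N erefl; have [lA ladj] := IH (fun j => h j.+1).
split=> [|u w].
  by apply: alg_ext (algD HA gA lA) => x; rewrite big_cons.
by rewrite !big_cons (ipDl Hip) (ipDr Hip) gadj ladj.
Qed.

Variable s : seq (V -> V).
Hypothesis s_atoms : forall j, (j < size s)%N -> is_atom ip A (nth d s j).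
Variable p0 : V -> V.
Hypothesis p0E : forall v, p0 v = \sum_(j < size s) nth d s j v.

Definition atom_trace (Y : V -> V) := \sum_(j < size s) corner (nth d s j) Y.

Lemma atom_traceD Y1 Y2 : A Y1 -> A Y2 -> selfadjoint Y1 -> selfadjoint Y2 ->
  atom_trace (fun v => Y1 v + Y2 v) = atom_trace Y1 + atom_trace Y2.
Proof.
move=> h1 h2 a1 a2; rewrite /atom_trace -big_split; apply: eq_bigr => j _.
exact: (cornerD Hip HA (s_atoms (ltn_ord j))).
Qed.

Lemma atom_trace0 : atom_trace (fun _ => 0) = 0.
Proof.
by rewrite /atom_trace big1 // => j _; apply: (corner0 Hip HA (s_atoms (ltn_ord j))).
Qed.

Lemma atom_trace_atom f : is_atom ip A f -> proj_le f p0 -> atom_trace f = 1.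
Proof.
move=> hf hle; have [[fA fid _] fnz _] := hf; have fl := alg_linear HA fA.
have -> : atom_trace f = \sum_(j < size s) corner f (nth d s j).
  by apply: eq_bigr => j _; apply: (corner_sym Hip HA (s_atoms (ltn_ord j))).
apply: (scale_fun_inj fnz) => v; rewrite scale1r scaler_suml.
rewrite -[RHS]fid -(hle (f v)) p0E (linop_sum fl); apply: eq_bigr => j _.
by have [[eA _ eadj] _ _] := s_atoms (ltn_ord j); rewrite (cornerP Hip HA hf eA eadj).
Qed.

Lemma atom_trace_sum (l : seq (V -> V)) :
  (forall j, (j < size l)%N -> is_atom ip A (nth d l j) /\ proj_le (nth d l j) p0) ->
  atom_trace (fun v => \sum_(g <- l) g v) = (size l)%:R.
Proof.
elim: l => [|g l IH] h.
  rewrite /= mulr0n -atom_trace0; congr atom_trace.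
  by apply: funext => v; rewrite big_nil.
have [hg gle] := h 0%N erefl; have [[gA _ gadj] _ _] := hg.
have hl j : (j < size l)%N -> is_atom ip A (nth d l j) /\ proj_le (nth d l j) p0.
  exact: h j.+1.
have [lA ladj] : A (fun v => \sum_(g <- l) g v) /\
    selfadjoint (fun v => \sum_(g <- l) g v).
  by apply: alg_selfadjoint_sum => j /hl [[[jA _ jadj] _ _] _].
have -> : (fun v => \sum_(g <- g :: l) g v) = (fun v => g v + \sum_(g <- l) g v).
  by apply: funext => v; rewrite big_cons.
rewrite atom_traceD // IH // (atom_trace_atom hg gle) /=.
by rewrite -[in RHS]addn1 natrD addrC.
Qed.

Lemma atom_trace_proj r : purely_atomic ip A -> is_proj ip A r -> proj_le r p0 ->
  exists k : nat, atom_trace r = k%:R /\ (r <> (fun _ => 0) -> (0 < k)%N).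
Proof.
move=> PA hr hle; have [l [hl rE]] := PA r hr; have [_ rid radj] := hr.
exists (size l); split; last first.
  move=> rnz; rewrite lt0n; apply/negP => /eqP /size0nil l0.
  by apply: rnz; rewrite rE l0; apply: funext => v; rewrite big_nil.
rewrite rE; apply: atom_trace_sum => j hj; split; first exact: hl.
apply: proj_le_trans hle; apply: (proj_sum_summand_le Hip radj rid) => // [k hk|v].
  by have [[_ kid kadj] _ _] := hl k hk.
by rewrite rE (big_nth d) big_mkord.
Qed.

End AtomTrace.

Lemma no_nat_descent (k : nat -> nat) : ~ (forall n, (k n.+1 < k n)%N).
Proof.
move=> hk; have hn n : (k n + n <= k 0%N)%N.
  elim: n => [|n IH]; first by rewrite addn0.
  by rewrite addnS; apply: leq_trans IH; rewrite ltn_add2r.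
by have := hn (k 0%N).+1; rewrite addnS ltnNge leq_addl.
Qed.

Lemma dependent_descent (T : Type) (X : T -> Prop) (lt : T -> T -> Prop) x0 :
  X x0 -> (forall x, X x -> exists2 y, X y & lt y x) ->
  exists f : nat -> T, forall n, X (f n) /\ lt (f n.+1) (f n).
Proof.
move=> X0 hstep.
have step x : exists y, X x -> X y /\ lt y x.
  have [Xx|nXx] := pselect (X x); last by exists x.
  by have [y Xy hy] := hstep x Xx; exists y.
have [g hg] := choice step.
have Xg n : X (iter n g x0) by elim: n => //= n IH; have [] := hg _ IH.
by exists (fun n => iter n g x0) => n; split; [exact: Xg | exact: (hg _ (Xg n)).2].
Qed.

Section ProjChain.
Variables (R : realType) (V : lmodType R[i]) (ip : V -> V -> R[i]).
Hypothesis Hip : is_inner_product ip.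
Variable A : (V -> V) -> Prop.
Hypothesis HA : is_Rstar_algebra ip A.
Local Notation d := (fun _ : V => 0 : V).

Definition proj_chain := exists p : nat -> (V -> V),
  forall n, is_proj ip A (p n) /\ proj_lt (p n.+1) (p n).

Lemma projB p q : is_proj ip A p -> is_proj ip A q -> proj_le q p ->
  is_proj ip A (fun v => p v - q v).
Proof.
move=> [pA pid padj] [qA qid qadj] hqp.
have pl := alg_linear HA pA; have ql := alg_linear HA qA.
have /(proj_le_fix Hip padj qadj) hpq := hqp.
split=> [|v|u w]; first exact: (algB HA pA qA).
  by rewrite (linopB pl) (linopB ql) pid hpq hqp qid subrr subr0.
by rewrite (ipBl Hip) (ipBr Hip) padj qadj.
Qed.

Lemma purely_atomic_no_proj_chain : purely_atomic ip A -> ~ proj_chain.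
Proof.
move=> PA [p hp]; have [s [s_atoms p0E]] := PA (p 0%N) (hp 0%N).1.
have p0E' v : p 0%N v = \sum_(j < size s) nth d s j v.
  by rewrite p0E (big_nth d) big_mkord.
have ple n : proj_le (p n) (p 0%N).
  elim: n => [|n IH]; last by apply: proj_le_trans IH; have [_ []] := hp n.
  by have [[_ pid _] _] := hp 0%N; move=> v; rewrite pid.
have trace_nat n : exists m : nat, atom_trace s (p n) = m%:R.
  have [m [hm _]] := atom_trace_proj Hip HA s_atoms p0E' PA (hp n).1 (ple n).
  by exists m.
have [k hk] := choice trace_nat.
apply: (@no_nat_descent k) => n.
have [hpn [hle hne]] := hp n; have [hpn1 _] := hp n.+1.
pose q := fun v => p n v - p n.+1 v.
have hq : is_proj ip A q by apply: projB.
have qle : proj_le q (p 0%N) by move=> v; rewrite /q (ple n) (ple n.+1).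
have qnz : q <> (fun _ => 0).
  move=> q0; apply: hne; apply: funext => v.
  by apply/eqP; rewrite eq_sym -subr_eq0; apply/eqP; rewrite -/(q v) q0.
have [m [hm m0]] := atom_trace_proj Hip HA s_atoms p0E' PA hq qle.
have pnE : p n = (fun v => p n.+1 v + q v) by apply: funext => v; rewrite /q subrKC.
have [[qA _ qadj] [[p1A _ p1adj] _]] := (hq, hp n.+1).
move: (hk n); rewrite pnE (atom_traceD Hip HA s_atoms) // hk hm -natrD => /eqP.
by rewrite eqr_nat => /eqP <-; rewrite -[X in (X < _)%N]addn0 ltn_add2l m0.
Qed.

Lemma atom_below r : ~ proj_chain -> is_proj ip A r -> r <> (fun _ => 0) ->
  exists2 e, is_atom ip A e & proj_le e r.
Proof.
move=> nc hr rnz; apply: contrapT => h; apply: nc.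
pose X q := [/\ is_proj ip A q, q <> (fun _ => 0) & proj_le q r].
have [|q [qp qnz qle]|p hp] := @dependent_descent _ X (@proj_lt _ V) r.
- by split=> // v; have [_ rid _] := hr; exact: rid.
- have [q' [q'p q'nz q'le q'q]] :
      exists q', [/\ is_proj ip A q', q' <> (fun _ => 0), proj_le q' q & q' <> q].
    apply: contrapT => nq'; apply: h; exists q => //; split=> // q' q'p q'nz q'le.
    by apply: contrapT => q'q; apply: nq'; exists q'.
  by exists q'; split=> //; apply: proj_le_trans q'le qle.
- by exists p => n; have [[] ] := hp n.
Qed.

Lemma no_proj_chain_purely_atomic : ~ proj_chain -> purely_atomic ip A.
Proof.
move=> nc p hp; apply: contrapT => hnd; apply: (nc).
pose X q := is_proj ip A q /\ ~ exists s : seq (V -> V),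
  (forall i, (i < size s)%N -> is_atom ip A (nth d s i)) /\
  q = (fun x => \sum_(e <- s) e x).
have [|q [hq nd]|c hc] := @dependent_descent _ X (@proj_lt _ V) p; first by split.
- have qnz : q <> (fun _ => 0).
    move=> q0; apply: nd; exists [::]; split => //.
    by rewrite q0; apply: funext => v; rewrite big_nil.
  have [e he hle] := atom_below nc hq qnz; have [[eA eid eadj] enz _] := he.
  have [_ qid _] := hq.
  exists (fun v => q v - e v); first split; first exact: projB.
  + move=> [s [hs es]]; apply: nd; exists (e :: s); split.
      by move=> [|i] //= hi; apply: hs.
    apply: funext => v; rewrite big_cons -(congr1 (fun f => f v) es) /=.
    by rewrite addrC subrK.
  + split=> [v|hqe]; first by rewrite /= qid hle.
    apply: enz; apply: funext => v; have /eqP := congr1 (fun f => f v) hqe.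
    by rewrite -subr_eq0 addrAC subrr add0r oppr_eq0 => /eqP.
- by exists c => n; have [[] ] := hc n.
Qed.

End ProjChain.

Section PrincipalIdeals.
Variables (R : realType) (V : lmodType R[i]) (ip : V -> V -> R[i]).
Hypothesis Hip : is_inner_product ip.
Variable A : (V -> V) -> Prop.
Hypothesis HA : is_Rstar_algebra ip A.
Local Notation selfadjoint T := (is_adjoint ip T T).
Local Notation pri := (principal_right_ideal A).

Definition ideal_chain := exists a : nat -> (V -> V), forall n, A (a n) /\
  (forall T, pri (a n.+1) T -> pri (a n) T) /\
  ~ (forall T, pri (a n) T -> pri (a n.+1) T).

Lemma pri_le_factor a b x : is_linear_op b -> A x -> (forall v, a v = b (x v)) ->
  forall T, pri a T -> pri b T.
Proof.
move=> bl xA hab T [y [lam [yA ->]]]; exists (fun v => x (y v) + lam *: x v), 0.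
split; first exact: (algD HA (algM HA xA yA) (algZ HA lam xA)).
by apply: funext => v; rewrite scale0r addr0 (linopD bl) (linopZ bl) !hab.
Qed.

Lemma proj_mem_pri p : is_proj ip A p -> pri p p.
Proof.
move=> [pA _ _]; exists (fun _ => 0), 1; split; first exact: (alg0 HA).
by apply: funext => v; rewrite (linop0 (alg_linear HA pA)) scale1r add0r.
Qed.

Lemma pri_proj_fix p T : is_proj ip A p -> pri p T -> forall v, p (T v) = T v.
Proof.
move=> [pA pid _] [x [lam [_ ->]]] v; have pl := alg_linear HA pA.
by rewrite (linopD pl) (linopZ pl) !pid.
Qed.

(* Since b is self-adjoint, X^m r(b) = 0 forces X r(b) = 0; this makes h(b),
   h = 1 - r / r(0), idempotent and the identity on the range of b. *)
Lemma selfadjoint_support_proj b : A b -> selfadjoint b ->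
  exists2 g : {poly R[i]}, is_proj ip A (horner_op b ('X * g)) &
    forall v, horner_op b ('X * g) (b v) = b v.
Proof.
move=> bA badj; have bl := alg_linear HA bA.
have [L Lr hL] := alg_selfadjoint_annihilator Hip HA bA badj.
pose r := \prod_(c <- L | c != 0) ('X - c%:P).
have [m Lm] : exists m, \prod_(c <- L) ('X - c%:P) = 'X ^+ m * r.
  rewrite (bigID (fun c => c == 0)) /= (eq_bigr (fun _ => 'X ^+ 1)).
    by rewrite prodrXr; eexists.
  by move=> c /eqP ->; rewrite subr0 expr1.
have Xr0 v : horner_op b ('X * r) v = 0.
  rewrite horner_opXM //; apply: (selfadjoint_iter_eq0 Hip (k := m) badj).
  by rewrite -horner_opXnM // exprS -mulrA horner_opXM // -Lm hL (linop0 bl).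
have rr : r \is a polyOver real_num_pred.
  rewrite /r big_seq_cond; apply: rpred_prod => c /andP[/Lr cr _].
  by rewrite polyOverXsubC.
pose rho := r.[0].
have rho0 : rho != 0.
  rewrite /rho /r horner_prod prodf_seq_neq0; apply/allP => c _.
  by apply/implyP => hc; rewrite hornerXsubC sub0r oppr_eq0.
pose h := 1 - (rho^-1)%:P * r.
have hr : h \is a polyOver real_num_pred.
  have rhor : rho \is Num.real by apply: rpred_horner => //; exact: rpred0.
  by rewrite rpredB ?rpred1 // rpredM ?polyOverC ?rpredV.
have [g hg] : exists g, h = 'X * g.
  have /factor_theorem [g ->] : root h 0.
    by rewrite /root !hornerE mulVf // subrr.
  by exists g; rewrite subr0 mulrC.
have hr0 v : horner_op b (h * r) v = 0.
  by rewrite hg -mulrA mulrCA horner_opM // Xr0 (linop0 (horner_op_linear bl g)).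
exists g; rewrite -hg; first split.
- by apply: (alg_horner_op HA bA); rewrite hg coefXM.
- move=> v; rewrite -horner_opM //.
  have -> : h * h = h - (rho^-1)%:P * (h * r) by rewrite /h; ring.
  by rewrite horner_opB // horner_opM // hr0 horner_opC scaler0 subr0.
- exact: horner_op_selfadjoint.
- move=> v; rewrite -{1}(horner_opX bl v) -horner_opM //.
  have -> : h * 'X = 'X - (rho^-1)%:P * ('X * r) by rewrite /h; ring.
  rewrite horner_opB // horner_opM //.
  by rewrite Xr0 horner_opC scaler0 subr0 horner_opX.
Qed.

Lemma range_proj a : A a ->
  exists p, is_proj ip A p /\ forall T, pri a T <-> pri p T.
Proof.
move=> aA; have [a' a'A hadj] := alg_adjoint HA aA.
have al := alg_linear HA aA; have a'l := alg_linear HA a'A.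
have a'adj x y : ip (a' x) y = ip x (a y).
  by rewrite (ip_conj Hip) -hadj -(ip_conj Hip).
pose b v := a (a' v).
have bA : A b := algM HA aA a'A.
have bl := alg_linear HA bA.
have badj : selfadjoint b by move=> x y; rewrite /b hadj a'adj.
have [g hp pb] := selfadjoint_support_proj bA badj.
set p := horner_op b ('X * g) in hp pb; have [pA _ padj] := hp.
have pl := alg_linear HA pA.
have /(proj_le_fix Hip padj badj) bp := pb.
have a'p u : a' (p u) = a' u.
  apply/eqP; rewrite -subr_eq0 -(linopB a'l); apply/eqP/(sqnorm_eq0 Hip).
  by rewrite /sqnorm a'adj -/(b _) (linopB bl) bp subrr (ip0r Hip).
have pa v : p (a v) = a v by apply: (ip_injl Hip) => w; rewrite padj hadj a'p -hadj.
have pE v : p v = a (a' (horner_op b g v)) by rewrite /p (horner_opXM bl).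
exists p; split=> // T; split; first exact: (pri_le_factor pl aA).
exact: (pri_le_factor al (alg_comp_horner_op HA _ bA a'A) pE).
Qed.

Lemma proj_chain_ideal_chain : proj_chain ip A -> ideal_chain.
Proof.
move=> [p hp]; exists p => n.
have [[pA _ padj] [hle hne]] := hp n; have [hp1 _] := hp n.+1.
have [p1A _ p1adj] := hp1; have pl := alg_linear HA pA.
split=> //; split.
  by apply: (pri_le_factor pl p1A) => v; rewrite (proj_le_fix Hip padj p1adj).1.
move=> /(_ _ (proj_mem_pri (hp n).1)) /(pri_proj_fix hp1) e.
by apply: hne; apply: funext => v; rewrite -e hle.
Qed.

Lemma ideal_chain_proj_chain : ideal_chain -> proj_chain ip A.
Proof.
move=> [a ha].
have [g hg] := choice (fun n => range_proj (ha n).1).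
exists g => n; have [gp gE] := hg n; have [gp1 g1E] := hg n.+1.
have [_ [inc ninc]] := ha n; have [_ _ gadj] := gp; have [_ _ g1adj] := gp1.
split=> //; split.
  apply/(proj_le_fix Hip gadj g1adj)/(pri_proj_fix gp).
  by apply/gE/inc/g1E; apply: proj_mem_pri.
by move=> g1g; apply: ninc => T /gE; rewrite -g1g => /g1E.
Qed.

End PrincipalIdeals.

Theorem proposition5p8 (R : realType) (V : lmodType R[i])
    (ip : V -> V -> R[i]) (A : (V -> V) -> Prop) :
  is_hilbert ip -> is_Rstar_algebra ip A ->
  (purely_atomic ip A <->
     ~ exists p : nat -> (V -> V),
         forall n : nat, is_proj ip A (p n) /\ proj_lt (p n.+1) (p n)) /\
  ((~ exists p : nat -> (V -> V),
         forall n : nat, is_proj ip A (p n) /\ proj_lt (p n.+1) (p n)) <->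
   ~ exists a : nat -> (V -> V),
       forall n : nat, A (a n) /\
         (forall T, principal_right_ideal A (a n.+1) T ->
                    principal_right_ideal A (a n) T) /\
         ~ (forall T, principal_right_ideal A (a n) T ->
                      principal_right_ideal A (a n.+1) T)).
Proof.
move=> [Hip _] HA; split; split.
- exact: purely_atomic_no_proj_chain.
- exact: no_proj_chain_purely_atomic.
- by move=> nc /(ideal_chain_proj_chain Hip HA).
- by move=> nic /(proj_chain_ideal_chain Hip HA).
Qed.
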